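(* Let $\varphi$ be a Boolean formula in 3-CNF with $m$ clauses and $n$ variables, and let $G$ be the graph constructed from $\varphi$ as described in the context, with $k = 14m+3n$. Then $\varphi$ is satisfiable if and only if $\mathrm{vc}(G)\le k$.
   Context: Let $\varphi$ consist of clauses $C_1,\dots,C_m$ over variables $x_1,\dots,x_n$, each clause containing exactly three literals, $C_i=(L_i^1\vee L_i^2\vee L_i^3)$. The graph $G$ has vertex set $\{u_{r,s,i}: r\in\{1,2,3\}, s\in\{1,\dots,7\}, i\in\{1,\dots,m\}\}\cup\{v_{r,s,j}: r\in\{1,2\}, s\in\{1,2,3\}, j\in\{1,\dots,n\}\}$ and edge set consisting of: $\{u_{r,s,i},u_{r',s',i}\}$ for all $r\ne r'$ in $\{1,2,3\}$, all $s,s'\in\{1,\dots,7\}$, all $i$; $\{v_{1,s,j},v_{2,s',j}\}$ for all $s,s'\in\{1,2,3\}$, all $j$; $\{u_{r,s,i},v_{1,s',j}\}$ for all $s\in\{1,\dots,7\}$, $s'\in\{1,2,3\}$ whenever $L_i^r = x_j$; and $\{u_{r,s,i},v_{2,s',j}\}$ for all $s\in\{1,\dots,7\}$, $s'\in\{1,2,3\}$ whenever $L_i^r=\neg x_j$. $\mathrm{vc}(G)$ is the minimum size of a vertex cover of $G$ (a set of vertices containing at least one endpoint of every edge). *)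

From mathcomp Require Import all_boot.
Set Implicit Arguments. Unset Strict Implicit. Unset Printing Implicit Defensive.

(* A literal over variables x_0..x_{n-1}: (j, true) is x_j, (j, false) is ~x_j. *)
Definition literal (n : nat) := ('I_n * bool)%type.

(* A 3-CNF formula with m clauses over n variables:
   phi i r is the literal L_i^r (r : 'I_3). *)
Definition cnf3 (m n : nat) := 'I_m -> 'I_3 -> literal n.

Definition lit_true n (a : 'I_n -> bool) (L : literal n) : bool :=
  a L.1 == L.2.

Definition satisfiable m n (phi : cnf3 m n) : Prop :=
  exists a : 'I_n -> bool, forall i : 'I_m, exists r : 'I_3, lit_true a (phi i r).

(* Vertices: inl (r, s, i) is u_{r,s,i}; inr (r, s, j) is v_{r,s,j}
   (indices shifted to start at 0). *)
Definition vertex (m n : nat) : finType :=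
  (('I_3 * 'I_7 * 'I_m) + ('I_2 * 'I_3 * 'I_n))%type.

Definition adj0 m n (phi : cnf3 m n) (x y : vertex m n) : bool :=
  match x, y with
  | inl (r, _, i), inl (r', _, i') => (i == i') && (r != r')
  | inr (t, _, j), inr (t', _, j') =>
      (j == j') && (val t == 0) && (val t' == 1)
  | inl (r, _, i), inr (t, _, j) =>
      ((phi i r).1 == j) &&
      (((phi i r).2 && (val t == 0)) || (~~ (phi i r).2 && (val t == 1)))
  | _, _ => false
  end.

Definition adj m n (phi : cnf3 m n) (x y : vertex m n) : bool :=
  adj0 phi x y || adj0 phi y x.

Definition is_vertex_cover (T : finType) (e : rel T) (S : {set T}) : bool :=
  [forall x, forall y, e x y ==> (x \in S) || (y \in S)].

(* Minimum size of a vertex cover (the full vertex set is always a cover). *)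
Definition vc (T : finType) (e : rel T) : nat :=
  \big[minn/#|T|]_(S : {set T} | is_vertex_cover e S) #|S|.

From mathcomp Require Import all_boot zify.

(* A vertex cover must contain, from each clause gadget (a complete tripartite
   graph on three blocks of 7 vertices), all but one block, and from each
   variable gadget (a complete bipartite graph on two blocks of 3 vertices), one
   whole block; hence it has at least 14m + 3n vertices.  A cover of exactly that
   size contains exactly one block per variable, which reads as a truth
   assignment, and misses exactly one block per clause; the literal edges then
   force the variable block of that block's literal into the cover, i.e. make the
   literal true.  Conversely, a satisfying assignment yields such a cover, missing
   in each clause the block of a true literal. *)

Set Implicit Arguments.
Unset Strict Implicit.
Unset Printing Implicit Defensive.

Lemma bigmin_leq (I : eqType) (r : seq I) x0 (P : pred I) (F : I -> nat) x :
  x \in r -> P x -> \big[minn/x0]_(y <- r | P y) F y <= F x.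
Proof.
elim: r => // y r IHr; rewrite in_cons big_cons => /predU1P[-> -> | rx Px].
  exact: geq_minl.
by case: (P y); rewrite ?geq_min IHr ?orbT.
Qed.

Lemma card_set_full (I : finType) (P : pred I) :
  #|[set x | P x]| = #|I| -> forall x, P x.
Proof.
move=> PT x; have /eqP/setP/(_ x) : [set x | P x] == setT.
  by rewrite eqEcard subsetT cardsT PT leqnn.
by rewrite !inE.
Qed.

Lemma card_set_empty (I : finType) (P : pred I) :
  #|[set x | P x]| = 0 -> forall x, ~~ P x.
Proof. by move=> /card0_eq P0 x; have := P0 x; rewrite !inE => ->. Qed.

Lemma card_set_const (I : finType) (b : bool) : #|[set _ : I | b]| = b * #|I|.
Proof. by case: b; rewrite ?mul1n ?mul0n ?cardsT ?cards0. Qed.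

Lemma leq_sum_const k c (F : 'I_k -> nat) :
  (forall i, c <= F i) -> c * k <= \sum_(i < k) F i.
Proof.
by move=> cF; rewrite -[X in c * X]card_ord mulnC -sum_nat_const; apply: leq_sum.
Qed.

Lemma sum_eq_const k c (F : 'I_k -> nat) :
  (forall i, c <= F i) -> \sum_(i < k) F i <= c * k -> forall i, F i = c.
Proof.
move=> cF sumF i; apply/eqP; rewrite eqn_leq cF andbT.
have : \sum_(j < k) (F j - c) == 0.
  by rewrite sumnB // sum_nat_const card_ord subn_eq0 mulnC.
by rewrite sum_nat_eq0 => /forallP/(_ i); rewrite subn_eq0.
Qed.

Lemma sum_triple (A B C : finType) (F : A * B * C -> nat) :
  \sum_x F x = \sum_(c : C) \sum_(a : A) \sum_(b : B) F (a, b, c).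
Proof.
rewrite [RHS]exchange_big /=; under [RHS]eq_bigr do rewrite exchange_big /=.
by rewrite pair_bigA pair_bigA /=; apply: eq_bigr => [[[a b] c]].
Qed.

Section VertexCover.

Variables (T : finType) (e : rel T).
Implicit Types S : {set T}.

Lemma vertex_coverP S :
  reflect (forall x y, e x y -> (x \in S) || (y \in S)) (is_vertex_cover e S).
Proof.
apply: (iffP forallP) => [cov x y | cov x].
  by move/forallP: (cov x) => /(_ y)/implyP.
by apply/forallP => y; apply/implyP; apply: cov.
Qed.

Lemma vc_min S : is_vertex_cover e S -> vc e <= #|S|.
Proof. by move=> covS; apply: bigmin_leq; rewrite ?mem_index_enum. Qed.

Lemma vc_leqP k : reflect (exists2 S, is_vertex_cover e S & #|S| <= k) (vc e <= k).
Proof.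
apply: (iffP idP) => [|[S covS leSk]]; last exact: leq_trans (vc_min covS) leSk.
rewrite /vc; elim/big_ind: _ => [leTk | x y IHx IHy | S covS leSk]; last by exists S.
- by exists setT; rewrite ?cardsT //; apply/vertex_coverP => x y _; rewrite in_setT.
- by rewrite geq_min => /orP[/IHx | /IHy].
Qed.

Lemma vertex_cover_join (I J : finType) (f : I -> T) (g : J -> T) S :
  is_vertex_cover e S -> (forall a b, e (f a) (g b)) ->
  #|[set a | f a \in S]| = #|I| \/ #|[set b | g b \in S]| = #|J|.
Proof.
move=> /vertex_coverP covS efg.
have [fS | /forallPn [a faS]] := boolP [forall a, f a \in S].
  by left; rewrite -cardsT; apply: eq_card => a; rewrite !inE (forallP fS).
right; rewrite -cardsT; apply: eq_card => b; rewrite !inE.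
by have := covS _ _ (efg a b); rewrite (negbTE faS).
Qed.

End VertexCover.

Section Reduction.

Variables (m n : nat) (phi : cnf3 m n).
Local Notation G := (@adj m n phi).
Implicit Types S : {set vertex m n}.

Definition clause_vertex (r : 'I_3) (s : 'I_7) (i : 'I_m) : vertex m n := inl (r, s, i).
Definition var_vertex (t : 'I_2) (s : 'I_3) (j : 'I_n) : vertex m n := inr (t, s, j).

Definition lit_vertex (L : literal n) (s : 'I_3) : vertex m n :=
  var_vertex (if L.2 then ord0 else ord_max) s L.1.

Lemma adj_clause i r r' s s' :
  r != r' -> G (clause_vertex r s i) (clause_vertex r' s' i).
Proof. by rewrite /adj /= eqxx => ->. Qed.

Lemma adj_var j s s' : G (var_vertex ord0 s j) (var_vertex ord_max s' j).
Proof. by rewrite /adj /= eqxx. Qed.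

Lemma adj_lit i r s s' : G (clause_vertex r s i) (lit_vertex (phi i r) s').
Proof. by rewrite /adj /= eqxx; case: (phi i r).2. Qed.

Lemma vertex_cover_adj0 S :
  (forall x y, adj0 phi x y -> (x \in S) || (y \in S)) -> is_vertex_cover G S.
Proof. by move=> cov; apply/vertex_coverP => x y /orP[/cov | /cov]; rewrite // orbC. Qed.

Definition clause_count S i r := #|[set s | clause_vertex r s i \in S]|.
Definition var_count S j t := #|[set s | var_vertex t s j \in S]|.

Definition clause_load S i := \sum_(r < 3) clause_count S i r.
Definition var_load S j := var_count S j ord0 + var_count S j ord_max.

Lemma card_vertex_set S :
  #|S| = \sum_(i < m) clause_load S i + \sum_(j < n) var_load S j.
Proof.
have count_sum (I : finType) (P : pred I) : #|[set x | P x]| = \sum_x (P x : nat).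
  by rewrite -sum1dep_card big_mkcond.
rewrite -sum1_card big_mkcond big_sumType /= !sum_triple.
congr (_ + _); apply: eq_bigr => i _.
  by apply: eq_bigr => r _; rewrite /clause_count count_sum.
rewrite big_ord_recl big_ord1 /var_load /var_count !count_sum.
by rewrite (_ : lift ord0 ord0 = ord_max) //; apply: val_inj.
Qed.

Section SmallCover.

Variable S : {set vertex m n}.
Hypothesis coverS : is_vertex_cover G S.

Lemma clause_full i r r' :
  r != r' -> clause_count S i r = 7 \/ clause_count S i r' = 7.
Proof.
move=> rr'; rewrite -[7]card_ord.
apply: (vertex_cover_join (f := clause_vertex r ^~ i) (g := clause_vertex r' ^~ i)
  coverS).
by move=> s s'; apply: adj_clause.
Qed.

Lemma clause_all_but_one_full i :
  exists r, forall r', r' != r -> clause_count S i r' = 7.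
Proof.
have [full | /forallPn [r not_full]] := boolP [forall r, clause_count S i r == 7].
  by exists ord0 => r' _; apply/eqP/(forallP full).
by exists r => r' r'r; have [|/eqP] := clause_full i r'r; last rewrite (negbTE not_full).
Qed.

Lemma clause_load_split i : exists r, clause_load S i = 14 + clause_count S i r.
Proof.
have [r full] := clause_all_but_one_full i; exists r.
rewrite /clause_load (bigD1 r) //= addnC (eq_bigr (fun=> 7)) => [|r' /full //].
by rewrite (sum_nat_const (predC1 r)) cardC1 card_ord.
Qed.

Lemma clause_load_ge i : 14 <= clause_load S i.
Proof. by have [r ->] := clause_load_split i; apply: leq_addr. Qed.

Lemma var_full j : var_count S j ord0 = 3 \/ var_count S j ord_max = 3.
Proof.
rewrite -[3]card_ord.
apply: (vertex_cover_join (f := var_vertex ord0 ^~ j) (g := var_vertex ord_max ^~ j)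
  coverS).
by move=> s s'; apply: adj_var.
Qed.

Lemma var_load_ge j : 3 <= var_load S j.
Proof. by rewrite /var_load; case: (var_full j) => ->; rewrite ?leq_addr ?leq_addl. Qed.

Lemma small_cover_tight : #|S| <= 14 * m + 3 * n ->
  (forall i, clause_load S i = 14) /\ (forall j, var_load S j = 3).
Proof.
rewrite card_vertex_set => small.
have := leq_sum_const clause_load_ge; have := leq_sum_const var_load_ge.
by split; apply: sum_eq_const; [exact: clause_load_ge | lia | exact: var_load_ge | lia].
Qed.

Definition cover_assignment (j : 'I_n) : bool := var_vertex ord0 ord0 j \in S.

Lemma tight_var_block j : var_load S j = 3 -> forall s,
  (var_vertex ord0 s j \in S) = cover_assignment j /\
  (var_vertex ord_max s j \in S) = ~~ cover_assignment j.
Proof.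
rewrite /var_load /cover_assignment => tight s.
have [full0 | full1] := var_full j.
- have /card_set_empty empty1 : var_count S j ord_max = 0 by lia.
  move: full0; rewrite -[3]card_ord => /card_set_full full0.
  by rewrite !full0 (negbTE (empty1 s)).
- have /card_set_empty empty0 : var_count S j ord0 = 0 by lia.
  move: full1; rewrite -[3]card_ord => /card_set_full full1.
  by rewrite !(negbTE (empty0 _)) full1.
Qed.

Lemma lit_vertex_tight (L : literal n) s :
  var_load S L.1 = 3 -> (lit_vertex L s \in S) = lit_true cover_assignment L.
Proof.
case: L => j [|] /= /tight_var_block/(_ s) [in0 in1]; rewrite /lit_vertex /lit_true /=.
  by rewrite in0 eqb_id.
by rewrite in1 eqbF_neg.
Qed.

Lemma small_cover_sat : #|S| <= 14 * m + 3 * n -> satisfiable phi.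
Proof.
move=> /small_cover_tight [tight_clause tight_var]; exists cover_assignment => i.
have [r] := clause_load_split i; rewrite tight_clause -{1}[14]addn0 => /eqP.
rewrite eqn_add2l eq_sym => /eqP /card_set_empty empty_r; exists r.
rewrite -(lit_vertex_tight ord0 (tight_var _)).
have /vertex_coverP/(_ _ _ (adj_lit i r ord0 ord0)) := coverS.
by rewrite (negbTE (empty_r ord0)).
Qed.

End SmallCover.

Section SatCover.

Variables (a : 'I_n -> bool) (ri : 'I_m -> 'I_3).
Hypothesis ri_true : forall i, lit_true a (phi i (ri i)).

Definition sat_cover : {set vertex m n} :=
  [set x | match x with
           | inl (r, _, i) => r != ri i
           | inr (t, _, j) => (t == ord0) == a j
           end].

Lemma sat_cover_is_cover : is_vertex_cover G sat_cover.
Proof.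
apply: vertex_cover_adj0 => [[[[r s] i] | [[t s] j]] [[[r' s'] i'] | [[t' s'] j']]] /=;
  rewrite !inE //.
- by case/andP => /eqP <- rr'; case: (eqVneq r (ri i)) => [<- | //]; rewrite eq_sym rr'.
- case: (eqVneq r (ri i)) => [-> | //] /andP[/eqP <-]; rewrite (eqP (ri_true i)).
  by case: (phi i (ri i)).2; case: t' => [[|[|//]] ?].
- case/andP => /andP[/eqP <- /eqP t0] /eqP t1.
  have -> : t = ord0 by apply: val_inj.
  have -> : t' = ord_max by apply: val_inj.
  by rewrite eqxx; case: (a j).
Qed.

Lemma card_sat_cover : #|sat_cover| = 14 * m + 3 * n.
Proof.
have clause_count_sat i r : clause_count sat_cover i r = (r != ri i) * 7.
  by rewrite -[7]card_ord -card_set_const; apply: eq_card => s; rewrite !inE.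
have var_count_sat j t : var_count sat_cover j t = ((t == ord0) == a j) * 3.
  by rewrite -[3]card_ord -card_set_const; apply: eq_card => s; rewrite !inE.
have clause_load_sat i : clause_load sat_cover i = 14.
  rewrite /clause_load (eq_bigr _ (fun r _ => clause_count_sat i r)).
  by rewrite !big_ord_recl big_ord0; case: (ri i) => [[|[|[|//]]] ?].
have var_load_sat j : var_load sat_cover j = 3.
  by rewrite /var_load !var_count_sat eqxx; case: (a j).
rewrite card_vertex_set (eq_bigr _ (fun i _ => clause_load_sat i)).
rewrite (eq_bigr _ (fun j _ => var_load_sat j)).
by rewrite !sum_nat_const !card_ord mulnC [3 * _]mulnC.
Qed.

End SatCover.

End Reduction.

Theorem lemma13 (m n : nat) (phi : cnf3 m n) :
  satisfiable phi <-> vc (@adj m n phi) <= 14 * m + 3 * n.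
Proof.
split=> [[a sat_a] | /vc_leqP [S coverS small]]; last exact: small_cover_sat coverS small.
pose ri i := odflt ord0 [pick r | lit_true a (phi i r)].
have ri_true i : lit_true a (phi i (ri i)).
  by rewrite /ri; case: pickP => //= none; have [r] := sat_a i; rewrite none.
by rewrite -(card_sat_cover a ri); apply/vc_min/sat_cover_is_cover.
Qed.
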